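(* Let $b \le 0$, let $\tau \ge 0$ be finite, and let $x_0 \ge 0$. Let $x(t)$ be the solution of the delay differential equation $$\frac{dx(t)}{dt} = x(t) - x^2(t)\exp\{-b\,x(t-\tau)\} \qquad (t>0)$$ with constant history $x(t) = x_0$ for $t \le 0$. Then $x(t)$ is bounded for all $t \ge 0$. Moreover, if $b < 0$, there exists a time $t_0 = t_0(x_0,\tau)$ such that $$0 \le x(t) \le 1 \qquad \text{for all } t \ge t_0.$$
   Context: This is the evolution equation $\frac{dx}{dt} = \sigma_1 x - \sigma_2 x^2 \exp\{-b x(t-\tau)\}$ for a dimensionless population $x(t)$ with nonlinear delayed carrying capacity $y = \exp\{b x(t-\tau)\}$, specialized to the case $\sigma_1 = \sigma_2 = 1$ (''gain and competition''); $b$ is the production parameter and $\tau$ the time delay. *)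

From Stdlib Require Import Reals.
Open Scope R_scope.

Definition dde_rhs (b tau : R) (x : R -> R) (t : R) : R :=
  x t - (x t) ^ 2 * exp (- b * x (t - tau)).

Definition is_dde_solution (b tau x0 : R) (x : R -> R) : Prop :=
  (forall t, t <= 0 -> x t = x0) /\
  (forall t, continuity_pt x t) /\
  (forall t, 0 < t -> derivable_pt_lim x t (dde_rhs b tau x t)).

(* The solution cannot leave [0, oo): where it is negative, x' - K x > 0 for a
   large K, so x e^(-K t) cannot decrease below 0.  Since b <= 0 and x >= 0, the
   delayed factor exp(-b x(t - tau)) is at least 1, hence x' <= x (1 - x) and no
   level M >= 1 can be crossed upwards.  For b < 0 the factor is at least
   exp(-b) > 1 as long as x stays above 1, and then x' <= -(exp(-b) - 1), so x
   must reach [0, 1] in finite time and remain there. *)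

From Stdlib Require Import Reals Lra Psatz Classical.
Open Scope R_scope.

Lemma exp_le_exp (u v : R) : u <= v -> exp u <= exp v.
Proof.
  intros [Hlt | ->]; [left; now apply exp_increasing | apply Rle_refl].
Qed.

Lemma derivable_pt_lim_exp_scal (K s : R) :
  derivable_pt_lim (fun s => exp (K * s)) s (K * exp (K * s)).
Proof.
  assert (Hlin : derivable_pt_lim (mult_real_fct K id) s (K * 1)).
  { apply derivable_pt_lim_scal; apply derivable_pt_lim_id. }
  pose proof (derivable_pt_lim_comp _ exp s _ _ Hlin (derivable_pt_lim_exp _)) as Hcomp.
  unfold comp, mult_real_fct, id in Hcomp.
  replace (K * exp (K * s)) with (exp (K * s) * (K * 1)) by ring.
  exact Hcomp.
Qed.

(* At a negative minimum m > a the positive derivative forces smaller values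
   just to the left of m. *)
Lemma nonneg_of_deriv_pos_where_neg (h : R -> R) (a c : R) :
  a <= c ->
  (forall t, a <= t <= c -> continuity_pt h t) ->
  0 <= h a ->
  (forall t, a < t <= c -> h t < 0 -> exists d, 0 < d /\ derivable_pt_lim h t d) ->
  0 <= h c.
Proof.
  intros Hac Hcont Ha Hder.
  destruct (continuity_ab_min h a c Hac Hcont) as [m [Hmin Hm]].
  destruct (Rle_or_lt 0 (h c)) as [Hc | Hc]; [assumption | exfalso].
  assert (Hhm : h m < 0) by (specialize (Hmin c); lra).
  assert (Ham : a < m).
  { destruct (Rle_lt_or_eq_dec a m (proj1 Hm)) as [? | <-]; [assumption | lra]. }
  destruct (Hder m (conj Ham (proj2 Hm)) Hhm) as [d [Hd Hlim]].
  destruct (Hlim (d / 2) ltac:(lra)) as [del Hdel].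
  pose proof (cond_pos del) as Hdel_pos.
  set (r := Rmin (del / 2) ((m - a) / 2)).
  assert (Hr1 : r <= del / 2) by apply Rmin_l.
  assert (Hr2 : r <= (m - a) / 2) by apply Rmin_r.
  assert (Hr : 0 < r) by (apply Rmin_glb_lt; lra).
  specialize (Hdel (- r) ltac:(lra) ltac:(rewrite Rabs_left; lra)).
  set (q := (h (m + - r) - h m) / - r) in Hdel.
  assert (Hq : h (m + - r) - h m = q * - r) by (unfold q; field; lra).
  assert (Hqd : q > d / 2) by (apply Rabs_def2 in Hdel; lra).
  assert (Hle : h m <= h (m + - r)) by (apply Hmin; lra).
  nra.
Qed.

Lemma nonneg_of_deriv_gt_scal_where_neg (f : R -> R) (K a c : R) :
  a <= c ->
  (forall t, a <= t <= c -> continuity_pt f t) ->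
  0 <= f a ->
  (forall t, a < t <= c -> f t < 0 -> exists d, K * f t < d /\ derivable_pt_lim f t d) ->
  0 <= f c.
Proof.
  intros Hac Hcont Ha Hder.
  set (h := fun t => f t * exp (- K * t)).
  enough (Hh : 0 <= h c).
  { unfold h in Hh; pose proof (exp_pos (- K * c)); nra. }
  apply (nonneg_of_deriv_pos_where_neg h a c Hac).
  - intros t Ht. apply continuity_pt_mult; [now apply Hcont |].
    apply derivable_continuous_pt; eexists; apply derivable_pt_lim_exp_scal.
  - unfold h; pose proof (exp_pos (- K * a)); nra.
  - intros t Ht Hneg.
    pose proof (exp_pos (- K * t)) as He.
    assert (Hft : f t < 0) by (unfold h in Hneg; nra).
    destruct (Hder t Ht Hft) as [d [Hd Hlim]].
    exists (d * exp (- K * t) + f t * (- K * exp (- K * t))). split.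
    + nra.
    + exact (derivable_pt_lim_mult f (fun s => exp (- K * s)) t _ _ Hlim
               (derivable_pt_lim_exp_scal (- K) t)).
Qed.

Section Solution.

Variables (b tau x0 : R) (x : R -> R).
Hypothesis (htau : 0 <= tau) (hx0 : 0 <= x0).
Hypothesis history : forall t, t <= 0 -> x t = x0.
Hypothesis continuous_x : forall t, continuity_pt x t.
Hypothesis deriv_x : forall t, 0 < t -> derivable_pt_lim x t (dde_rhs b tau x t).

Lemma dde_solution_nonneg (hb : b <= 0) (t : R) : 0 <= x t.
Proof.
  destruct (Rle_or_lt t 0) as [Ht | Ht]; [rewrite history; lra |].
  destruct (continuity_ab_maj x (- tau) t ltac:(lra) (fun s _ => continuous_x s))
    as [tmax [Hmax _]].
  destruct (continuity_ab_min x (- tau) t ltac:(lra) (fun s _ => continuous_x s))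
    as [tmin [Hmin _]].
  set (A := Rabs (x tmin)).
  set (e := exp (- b * x tmax)).
  assert (He : 0 < e) by apply exp_pos.
  assert (HA : 0 <= A) by apply Rabs_pos.
  (* On [0, t]: x >= -A and exp(-b x(s - tau)) <= e, so x' >= (1 + A e) x where x < 0. *)
  apply (nonneg_of_deriv_gt_scal_where_neg x (2 + A * e) 0 t ltac:(lra)).
  - intros s _; apply continuous_x.
  - rewrite history; lra.
  - intros s Hs Hneg. exists (dde_rhs b tau x s). split; [| apply deriv_x; lra].
    unfold dde_rhs.
    set (E := exp (- b * x (s - tau))).
    assert (HE : E <= e).
    { apply exp_le_exp. assert (x (s - tau) <= x tmax) by (apply Hmax; lra). nra. }
    assert (HxA : - A <= x s).
    { assert (x tmin <= x s) by (apply Hmin; lra).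
      pose proof (Rle_abs (- x tmin)); rewrite Rabs_Ropp in *; unfold A; lra. }
    assert (Hsq : x s ^ 2 <= - A * x s) by (simpl; nra).
    assert (x s ^ 2 * E <= - A * x s * e).
    { apply Rle_trans with (x s ^ 2 * e).
      - apply Rmult_le_compat_l; [nra | exact HE].
      - apply Rmult_le_compat_r; lra. }
    nra.
Qed.

Lemma dde_solution_le_from (hb : b <= 0) (a M : R) :
  0 <= a -> 1 <= M -> x a <= M -> forall t, a <= t -> x t <= M.
Proof.
  intros Ha HM Hxa t Hat.
  enough (H : 0 <= M - x t) by lra.
  apply (nonneg_of_deriv_pos_where_neg (fun s => M - x s) a t Hat).
  - intros s _. apply continuity_pt_minus; [apply continuity_pt_const; now intros ? ? | apply continuous_x].
  - lra.
  - intros s Hs Hneg. exists (0 - dde_rhs b tau x s). split.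
    + unfold dde_rhs.
      assert (HE : 1 <= exp (- b * x (s - tau))).
      { rewrite <- exp_0. apply exp_le_exp.
        pose proof (dde_solution_nonneg hb (s - tau)). nra. }
      simpl; nra.
    + exact (derivable_pt_lim_minus (fct_cte M) x s _ _
               (derivable_pt_lim_const M s) (deriv_x s ltac:(lra))).
Qed.

Lemma dde_solution_linear_decay (hb : b < 0) (T : R) :
  0 <= T -> (forall s, 0 <= s <= T -> 1 < x s) ->
  x T <= x0 - (exp (- b) - 1) * T.
Proof.
  intros HT Habove.
  set (del := exp (- b) - 1).
  assert (Hdel : 0 < del) by (pose proof (exp_ineq1 (- b) ltac:(lra)); unfold del; lra).
  assert (Hx0 : 1 < x0) by (rewrite <- (history 0) by lra; apply Habove; lra).
  enough (H : 0 <= x0 - del * T - x T) by lra.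
  apply (nonneg_of_deriv_pos_where_neg (fun s => x0 - del * s - x s) 0 T HT).
  - intros s _. apply continuity_pt_minus; [| apply continuous_x].
    apply continuity_pt_minus; [apply continuity_pt_const; now intros ? ? |].
    apply continuity_pt_scal, derivable_continuous_pt, derivable_id.
  - rewrite history; lra.
  - intros s Hs _. exists (0 - del * 1 - dde_rhs b tau x s). split.
    + unfold dde_rhs.
      assert (Hxs : 1 < x s) by (apply Habove; lra).
      assert (Hdelayed : 1 <= x (s - tau)).
      { destruct (Rle_or_lt (s - tau) 0).
        - rewrite history; lra.
        - left; apply Habove; lra. }
      assert (HE : 1 + del <= exp (- b * x (s - tau))).
      { unfold del. replace (1 + (exp (- b) - 1)) with (exp (- b * 1)) by (rewrite Rmult_1_r; ring).
        apply exp_le_exp. nra. }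
      assert (x s * x s * (1 + del) <= x s * x s * exp (- b * x (s - tau)))
        by (apply Rmult_le_compat_l; nra).
      assert (del * (x s * x s - 1) > 0) by (apply Rmult_lt_0_compat; nra).
      simpl; nra.
    + exact (derivable_pt_lim_minus (fun s => x0 - del * s) x s _ _
               (derivable_pt_lim_minus (fct_cte x0) (mult_real_fct del id) s _ _
                  (derivable_pt_lim_const x0 s)
                  (derivable_pt_lim_scal id del s 1 (derivable_pt_lim_id s)))
               (deriv_x s ltac:(lra))).
Qed.

Lemma dde_solution_reaches_unit_interval (hb : b < 0) :
  exists t1, 0 <= t1 /\ x t1 <= 1.
Proof.
  set (T := x0 / (exp (- b) - 1)).
  assert (Hdel : 0 < exp (- b) - 1) by (pose proof (exp_ineq1 (- b) ltac:(lra)); lra).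
  assert (HT : 0 <= T) by (apply Rmult_le_pos; [lra | left; apply Rinv_0_lt_compat; lra]).
  destruct (classic (exists t1, 0 <= t1 <= T /\ x t1 <= 1)) as [[t1 [Ht1 Hx1]] | Hnone].
  - exists t1; split; [lra | exact Hx1].
  - exfalso.
    assert (Habove : forall s, 0 <= s <= T -> 1 < x s).
    { intros s Hs. apply Rnot_le_lt. intros Hle. apply Hnone. now exists s. }
    pose proof (dde_solution_linear_decay hb T HT Habove) as Hdecay.
    replace ((exp (- b) - 1) * T) with x0 in Hdecay by (unfold T; field; lra).
    pose proof (Habove T (conj HT (Rle_refl T))). lra.
Qed.

End Solution.

Theorem proposition1 (b tau x0 : R) (x : R -> R)
  (hb : b <= 0) (htau : 0 <= tau) (hx0 : 0 <= x0)
  (hsol : is_dde_solution b tau x0 x) :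
  (exists M : R, forall t : R, 0 <= t -> Rabs (x t) <= M) /\
  (b < 0 -> exists t0 : R, forall t : R, t0 <= t -> 0 <= x t /\ x t <= 1).
Proof.
  destruct hsol as [history [continuous_x deriv_x]].
  pose proof (dde_solution_nonneg b tau x0 x htau hx0 history continuous_x deriv_x hb)
    as Hnonneg.
  pose proof (dde_solution_le_from b tau x0 x htau hx0 history continuous_x deriv_x hb)
    as Hle_from.
  split.
  - exists (Rmax x0 1). intros t Ht.
    rewrite Rabs_right by (apply Rle_ge, Hnonneg).
    apply (Hle_from 0); [lra | apply Rmax_r | | exact Ht].
    rewrite history by lra. apply Rmax_l.
  - intros hb'.
    destruct (dde_solution_reaches_unit_interval b tau x0 x htau hx0 history continuous_x
                deriv_x hb') as [t1 [Ht1 Hx1]].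
    exists t1. intros t Ht. split; [apply Hnonneg | now apply (Hle_from t1)].
Qed.
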